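(* Let $G\in\mathcal{P}_1(\Theta)$ be such that $\operatorname{supp}(G)$ is a non-degenerate interval. Then $G$ has a regular SBA. Furthermore, for every $n\in\mathbb{N}$ the intervals $\bar\Theta_{n,1},\ldots,\bar\Theta_{n,2^n}$ are non-degenerate and form a partition of $\operatorname{supp}(G)$.
   Context: $\Theta\subseteq\mathbb{R}$ is $\mathbb{R}$, a closed half-line, or a compact interval with nonempty interior. $\mathcal{P}_1(\Theta)$: Borel probability measures on $\Theta$ with finite first moment; $G$ is identified with its distribution function. $b_G(a_1,a_2]=\int_{(a_1,a_2]}\theta\,dG/(G(a_2)-G(a_1))$ if $G(a_2)>G(a_1)$, else $a_1$. SBA: $\mu_{1,1}=\int\theta\,dG$; for $j\ge2$, $\mu_{j,2l}=\mu_{j-1,l}$ ($1\le l\le 2^{j-1}-1$), $\mu_{j,2l-1}=b_G(\mu_{j-1,l-1},\mu_{j-1,l}]$ ($1\le l\le 2^{j-1}$), with $\mu_{j,0}=\inf\Theta$, $\mu_{j,2^j}=\sup\Theta$. $G$ has a regular level $n$ SBA if $\mu_{n,1},\ldots,\mu_{n,2^n-1}$ are distinct, and a regular SBA if this holds for all $n$. Level $n$ intervals: $\Theta_{n,1}=[\mu_{n,0},\mu_{n,1}]$ if $\mu_{n,0}>-\infty$, else $(\mu_{n,0},\mu_{n,1}]$; $\Theta_{n,l}=(\mu_{n,l-1},\mu_{n,l}]$ for $2\le l\le 2^n-1$; $\Theta_{n,2^n}=(\mu_{n,2^n-1},\mu_{n,2^n}]$ if $\mu_{n,2^n}<\infty$,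 else $(\mu_{n,2^n-1},\infty)$. Then $\bar\Theta_{n,1}=\Theta_{n,1}\cap\operatorname{supp}(G)$, $\bar\Theta_{n,l}=\Theta_{n,l}$ for $2\le l\le 2^n-1$, $\bar\Theta_{n,2^n}=\Theta_{n,2^n}\cap\operatorname{supp}(G)$. *)

From HB Require Import structures.
From mathcomp Require Import all_boot all_order all_algebra.
From mathcomp Require Import all_classical all_reals all_analysis.
Set Implicit Arguments. Unset Strict Implicit. Unset Printing Implicit Defensive.
Import Order.TTheory GRing.Theory Num.Theory.
Import numFieldNormedType.Exports.
Local Open Scope classical_set_scope.
Local Open Scope ring_scope.

Section SBA.
Variable R : realType.

Definition admissible_Theta (Theta : set R) : Prop :=
  Theta = setT \/
  (exists a : R, Theta = `[a, +oo[%classic) \/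
  (exists a : R, Theta = `]-oo, a]%classic) \/
  (exists a b : R, a < b /\ Theta = `[a, b]%classic).

Definition in_P1 (Theta : set R) (G : probability R R) : Prop :=
  G Theta = 1%E /\ G.-integrable setT (fun x : R => x%:E).

Definition suppG (G : probability R R) : set R :=
  [set x | forall e : R, 0 < e ->
    let I := `](x - e)%R, (x + e)%R[%classic in (0 < G I)%E].

Definition nondeg_set (A : set R) : Prop :=
  exists x y, A x /\ A y /\ x < y.

Definition infT (Theta : set R) : \bar R := ereal_inf (EFin @` Theta).
Definition supT (Theta : set R) : \bar R := ereal_sup (EFin @` Theta).

Definition ocE (a1 a2 : \bar R) : set R := [set x | (a1 < x%:E)%E /\ (x%:E <= a2)%E].

Definition bG (G : probability R R) (a1 a2 : \bar R) : \bar R :=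
  if (0 < G (ocE a1 a2))%E
  then (fine (\int[G]_(x in ocE a1 a2) x%:E) / fine (G (ocE a1 a2)))%:E
  else a1.

Definition meanG (G : probability R R) : \bar R := \int[G]_x x%:E.

(* sba_aux k l = mu_{k+1, l} *)
Fixpoint sba_aux (Theta : set R) (G : probability R R) (k l : nat) : \bar R :=
  match k with
  | 0 => if l == 0 then infT Theta
         else if l == 1 then meanG G else supT Theta
  | k'.+1 =>
      if l == 0 then infT Theta
      else if l == (2 ^ k.+1)%N then supT Theta
      else if odd l then bG G (sba_aux Theta G k' l./2) (sba_aux Theta G k' (l./2).+1)
      else sba_aux Theta G k' l./2
  end.

(* mu_{n,l}, for n >= 1 and 0 <= l <= 2^n *)
Definition mu (Theta : set R) (G : probability R R) (n l : nat) : \bar R :=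
  sba_aux Theta G n.-1 l.

Definition regular_level (Theta : set R) (G : probability R R) (n : nat) : Prop :=
  forall l1 l2 : nat, (1 <= l1 < 2 ^ n)%N -> (1 <= l2 < 2 ^ n)%N ->
    mu Theta G n l1 = mu Theta G n l2 -> l1 = l2.

Definition regular_SBA (Theta : set R) (G : probability R R) : Prop :=
  forall n : nat, (1 <= n)%N -> regular_level Theta G n.

Definition Theta_int (Theta : set R) (G : probability R R) (n l : nat) : set R :=
  let m := mu Theta G n in
  if l == 1 then
    (if (m 0%N == -oo)%E then ocE (m 0%N) (m 1%N)
     else [set x | (m 0%N <= x%:E)%E /\ (x%:E <= m 1%N)%E])
  else if l == (2 ^ n)%N then
    (if (m (2 ^ n)%N < +oo)%E then ocE (m (2 ^ n)%N.-1) (m (2 ^ n)%N)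
     else [set x | (m (2 ^ n)%N.-1 < x%:E)%E])
  else ocE (m l.-1) (m l).

Definition Theta_bar (Theta : set R) (G : probability R R) (n l : nat) : set R :=
  if (l == 1) || (l == (2 ^ n)%N) then Theta_int Theta G n l `&` suppG G
  else Theta_int Theta G n l.

End SBA.

From HB Require Import structures.
From mathcomp Require Import all_boot all_order all_algebra.
From mathcomp Require Import all_classical all_reals all_analysis.
From mathcomp Require Import measurable_realfun.
From mathcomp Require Import ring lra.
Set Implicit Arguments. Unset Strict Implicit. Unset Printing Implicit Defensive.
Import Order.TTheory GRing.Theory Num.Theory.
Import numFieldNormedType.Exports.
Local Open Scope classical_set_scope.
Local Open Scope ring_scope.

(* If ]p, q[ ⊆ A for support points p < q, the conditional mean b of G on A lies
   strictly between two support points of A: since ∫_A (x - b) dG = 0, A carries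
   mass above b iff it carries mass below b, the midpoint of p and q (a support
   point, supp G being an interval) forces mass on at least one side, and sets of
   positive mass meet the support.  Then b is itself a support point.  By induction
   on the level, every cell (mu_{n,l-1}, mu_{n,l}] contains two support points, so
   the mu_{n,l} increase strictly; this gives regularity and disjointness, puts the
   middle cells inside supp G, and the cells cover supp G because
   mu_{n,0} = inf Theta and mu_{n,2^n} = sup Theta. *)

Section integral_sign.
Context d (T : measurableType d) (R : realType) (mu : {measure set T -> \bar R}).
Local Open Scope ereal_scope.

Lemma null_lt0_of_integral0 (A : set T) (f : T -> R) : measurable A ->
  mu.-integrable A (EFin \o f) -> \int[mu]_(x in A) (f x)%:E = 0 ->
  mu (A `&` [set x | (0 < f x)%R]) = 0 -> mu (A `&` [set x | (f x < 0)%R]) = 0.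
Proof.
move=> mA intf i0 pos0.
have mfE := measurable_int mu intf.
have mf : measurable_fun A f by exact/measurable_EFinP.
have mpos : measurable (A `&` [set x | (0 < f x)%R]).
  have := mf mA `]0%R, +oo[%classic (measurable_itv _).
  by congr measurable; apply/seteqP; split=> x /=; rewrite in_itv/= andbT.
have mneg : measurable (A `&` [set x | (f x < 0)%R]).
  have := mf mA `]-oo, 0%R[%classic (measurable_itv _).
  by congr measurable; apply/seteqP; split=> x /=; rewrite in_itv/=.
rewrite (negligible_integral mpos mA intf pos0) in i0.
set D := A `\` _ in i0.
have mD : measurable D by exact: measurableD.
(* f <= 0 on D and its integral over D vanishes, hence f = 0 a.e. on D. *)
have fle0 x : D x -> (f x <= 0)%R.
  by move=> [Ax /not_andP[//|/negP]]; rewrite -leNgt.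
have iabs0 : \int[mu]_(x in D) `|(f x)%:E| = 0.
  rewrite (eq_integral (fun x => - (f x)%:E)); last first.
    by move=> x /[!inE] Dx /=; rewrite ler0_norm ?fle0// EFinN.
  have := @integral_ge0N _ _ _ mu D (fun x => - (f x)%:E).
  rewrite (eq_integral (fun x => (f x)%:E)) ?i0; last by move=> x _; rewrite oppeK.
  move=> h; apply/eqP; rewrite -oppe_eq0 -h ?oppe0// => x Dx.
  by rewrite oppe_ge0 lee_fin fle0.
have mfD : measurable_fun D (EFin \o f) by apply: measurable_funS mfE => // x [].
have [N [mN N0 DN]] := (ae_eq_integral_abs mu mD mfD).1 iabs0.
apply: (subset_measure0 mneg mN _ N0) => x [Ax fx0]; apply: DN => /=.
have Dx : D x by split=> // -[_ /= fx]; move: (lt_trans fx0 fx); rewrite ltxx.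
by move=> /(_ Dx) []; apply/eqP; rewrite lt_eqF.
Qed.

Lemma integral0_null_gt0_lt0 (A : set T) (f : T -> R) : measurable A ->
  mu.-integrable A (EFin \o f) -> \int[mu]_(x in A) (f x)%:E = 0 ->
  mu (A `&` [set x | (0 < f x)%R]) = 0 <-> mu (A `&` [set x | (f x < 0)%R]) = 0.
Proof.
move=> mA intf i0; split; first exact: null_lt0_of_integral0.
have intNf : mu.-integrable A (EFin \o (fun x => - f x)%R).
  by apply: eq_integrable (integrableN intf) => // x _ /=; rewrite EFinN.
have iNf0 : \int[mu]_(x in A) (- f x)%:E = 0.
  under eq_integral do rewrite EFinN -mulN1e.
  by rewrite (integralZl mA intf) i0 mule0.
have posE : A `&` [set x | (0 < - f x)%R] = A `&` [set x | (f x < 0)%R].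
  by apply/seteqP; split=> x [Ax fx]; split; rewrite //= ?oppr_gt0 in fx *.
have negE : A `&` [set x | (- f x < 0)%R] = A `&` [set x | (0 < f x)%R].
  by apply/seteqP; split=> x [Ax fx]; split; rewrite //= ?oppr_lt0 in fx *.
by rewrite -negE -posE; exact: null_lt0_of_integral0.
Qed.

End integral_sign.

Section basics.
Context (R : realType).
Local Open Scope ereal_scope.

Lemma measurable_ocE (a1 a2 : \bar R) : measurable (ocE a1 a2).
Proof.
have := @EFin_measurable R setT measurableT _ (emeasurable_itv `]a1, a2]).
rewrite setTI; congr measurable; apply/seteqP; split=> x /=; rewrite in_itv/=.
  by move/andP.
by move=> [-> ->].
Qed.

Lemma infT_le (Theta : set R) x : Theta x -> infT Theta <= x%:E.
Proof. by move=> Tx; apply: ereal_inf_lbound; exists x. Qed.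

Lemma le_supT (Theta : set R) x : Theta x -> x%:E <= supT Theta.
Proof. by move=> Tx; apply: ereal_sup_ubound; exists x. Qed.

Lemma nondeg_setS (A B : set R) : A `<=` B -> nondeg_set A -> nondeg_set B.
Proof. by move=> AB [x [y [Ax [Ay xy]]]]; exists x, y; split; [|split]; try exact: AB. Qed.

Lemma ocE_nondeg_lt (a1 a2 : \bar R) (B : set R) :
  nondeg_set (ocE a1 a2 `&` B) -> a1 < a2.
Proof.
move=> [x [y [[[a1x _] _] [[[_ ya2] _] xy]]]].
by apply: lt_le_trans a1x (le_trans _ ya2); rewrite lee_fin ltW.
Qed.

Lemma admissible_Theta_closed (Theta : set R) :
  admissible_Theta Theta -> closed Theta.
Proof.
case=> [->|[[a ->]|[[a ->]|[a [b [_ ->]]]]]]; first exact: closedT.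
all: exact: interval_closed.
Qed.

End basics.

Section support.
Context (R : realType) (G : probability R R).
Local Open Scope ereal_scope.

Definition rat_itv (n : nat) : set R :=
  if unpickle n is Some (r1, r2) then `](ratr r1 : R), (ratr r2)[%classic else set0.

Lemma measurable_rat_itv n : measurable (rat_itv n).
Proof. by rewrite /rat_itv; case: (unpickle n) => [[]|] //. Qed.

Definition mean_on (A : set R) : R :=
  (fine (\int[G]_(x in A) x%:E) / fine (G A))%R.

(* Were A disjoint from the support, the countably many G-null intervals with
   rational endpoints would cover A. *)
Lemma supp_meets_measure_gt0 A : measurable A -> 0 < G A -> exists2 x, A x & suppG G x.
Proof.
move=> mA GA; apply: contrapT => noA.
pose F n := if G (rat_itv n) == 0 then rat_itv n else set0.
have mF n : measurable (F n) by rewrite /F; case: ifP => _ //; exact: measurable_rat_itv.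
suff AF : A `<=` \bigcup_n F n.
  have := measure_sigma_subadditive G mF mA AF.
  rewrite eseries0 ?leNgt ?GA// => n _ _.
  by rewrite /F; case: ifP => [/eqP//|]; rewrite measure0.
move=> x Ax.
have : ~ suppG G x by move=> sx; apply: noA; exists x.
move=> /existsNP [e /not_implyP [e0 /negP]]; rewrite -leNgt measure_le0 => /eqP Ge.
have [q1 /[!in_itv] /andP [q1a q1b]] :=
  @rat_in_itvoo R (x - e)%R x ltac:(by rewrite ltrBlDr ltrDl).
have [q2 /[!in_itv] /andP [q2a q2b]] := @rat_in_itvoo R x (x + e)%R ltac:(by rewrite ltrDl).
have q12E : rat_itv (pickle (q1, q2)) = `](ratr q1 : R), (ratr q2)[%classic.
  by rewrite /rat_itv pickleK.
have sub : rat_itv (pickle (q1, q2)) `<=` `](x - e)%R, (x + e)%R[%classic.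
  rewrite q12E => y /=; rewrite !in_itv/= => /andP [h1 h2].
  by rewrite (lt_trans q1a h1) (lt_trans h2 q2b).
exists (pickle (q1, q2)) => //; rewrite /F.
have -> : G (rat_itv (pickle (q1, q2))) = 0.
  exact: (subset_measure0 (measurable_rat_itv _) (measurable_itv _) sub Ge).
by rewrite eqxx q12E /= in_itv/=; apply/andP.
Qed.

Lemma suppG_sub_closed (C : set R) : closed C -> G C = 1 -> suppG G `<=` C.
Proof.
move=> cC GC x sx; apply: contrapT => Cx.
have mC : measurable C := closed_measurable cC.
have : nbhs x (~` C) by apply: open_nbhs_nbhs; split=> //; exact: closed_openC.
move=> /nbhs_ballP [e /= e0 ballC].
have GnC : G (~` C) = 0 by rewrite probability_setC// GC subee.
have GI0 : G `](x - e)%R, (x + e)%R[%classic = 0.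
  rewrite -(ball_itv x e); apply: (subset_measure0 _ _ ballC GnC).
  - by rewrite (ball_itv x e); exact: measurable_itv.
  - exact: measurableC.
by have := sx e e0; rewrite /= GI0 ltxx.
Qed.

Lemma integral_sub_mean_on A : measurable A -> G.-integrable A EFin -> 0 < G A ->
  \int[G]_(x in A) (x - mean_on A)%:E = 0.
Proof.
move=> mA intA GA0; set b := mean_on A.
have GAfin : G A \is a fin_num by rewrite fin_num_measure.
have intfin : \int[G]_(x in A) x%:E \is a fin_num by exact: integrable_fin_num.
have bGA : (b * fine (G A))%R = fine (\int[G]_(x in A) x%:E).
  by rewrite /b /mean_on -mulrA mulVf ?mulr1// gt_eqF// -lte_fin fineK.
have intb : G.-integrable A (EFin \o cst b) by exact: finite_measure_integrable_cst.
under eq_integral do rewrite EFinB.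
rewrite (@integralB_EFin _ _ _ G A id (cst b) mA intA intb) /=.
rewrite integral_cst// -(fineK intfin) -bGA EFinM fineK ?fin_num_measure//.
by rewrite subee// fin_numM.
Qed.

Lemma mean_on_null_above_below A : measurable A -> G.-integrable A EFin -> 0 < G A ->
  G (A `&` `]mean_on A, +oo[) = 0 <-> G (A `&` `]-oo, mean_on A[) = 0.
Proof.
move=> mA intA GA0; set b := mean_on A.
have intAb : G.-integrable A (EFin \o (fun x => x - b)%R).
  by apply: eq_integrable (integrableB mA intA (finite_measure_integrable_cst _ b mA)).
have aboveE : A `&` [set x | (0 < x - b)%R] = A `&` `]b, +oo[.
  by apply/seteqP; split=> x [Ax h]; split=> //; rewrite /= in_itv/= andbT subr_gt0 in h *.
have belowE : A `&` [set x | (x - b < 0)%R] = A `&` `]-oo, b[.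
  by apply/seteqP; split=> x [Ax h]; split=> //; rewrite /= in_itv/= subr_lt0 in h *.
by rewrite -aboveE -belowE; exact: integral0_null_gt0_lt0 (integral_sub_mean_on mA intA GA0).
Qed.

Section interval_support.
Hypothesis suppI : is_interval (suppG G).

Lemma measure_itv_supp_gt0 p q : suppG G p -> suppG G q -> (p < q)%R ->
  0 < G `]p, q[%classic.
Proof.
move=> sp sq pq.
have sm : suppG G ((p + q) / 2)%R by apply: (suppI sp sq); apply/andP; split; lra.
have e1 : ((p + q) / 2 - (q - p) / 2)%R = p by field.
have e2 : ((p + q) / 2 + (q - p) / 2)%R = q by field.
by have := sm ((q - p) / 2)%R; rewrite divr_gt0 ?subr_gt0// e1 e2; apply.
Qed.

Lemma measure_itv_below_or_above_gt0 p q b : suppG G p -> suppG G q -> (p < q)%R ->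
  0 < G (`]p, q[ `&` `]-oo, b[) \/ 0 < G (`]p, q[ `&` `]b, +oo[).
Proof.
move=> sp sq pq; set m := ((p + q) / 2)%R.
have [pm mq] : (p < m)%R /\ (m < q)%R by split; rewrite /m; lra.
have sm : suppG G m by apply: (suppI sp sq); rewrite !ltW.
have [mb|bm] := leP m b; [left|right].
- apply: lt_le_trans (measure_itv_supp_gt0 sp sm pm) _.
  apply: le_measure; rewrite ?inE; [exact: measurable_itv|exact: measurableI|].
  move=> x /=; rewrite !in_itv/= => /andP[px xm].
  by rewrite px (lt_trans xm mq) (lt_le_trans xm mb).
- apply: lt_le_trans (measure_itv_supp_gt0 sm sq mq) _.
  apply: le_measure; rewrite ?inE; [exact: measurable_itv|exact: measurableI|].
  move=> x /=; rewrite !in_itv/= => /andP[mx xq].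
  by rewrite xq (lt_trans pm mx) (lt_trans bm mx).
Qed.

Lemma nondeg_supp_ocE (a1 a2 : \bar R) x y : a1 <= x%:E -> (x < y)%R -> y%:E <= a2 ->
  suppG G x -> suppG G y -> nondeg_set (ocE a1 a2 `&` suppG G).
Proof.
move=> a1x xy ya2 sx sy; set m := ((x + y) / 2)%R.
have [xm my] : (x < m)%R /\ (m < y)%R by split; rewrite /m; lra.
exists m, y; split; [|split=> //]; split.
- split; first by apply: le_lt_trans a1x _; rewrite lte_fin.
  by apply: le_trans _ ya2; rewrite lee_fin ltW.
- by apply: (suppI sx sy); rewrite !ltW.
- by split=> //; apply: le_lt_trans a1x _; rewrite lte_fin (lt_trans xm).
- exact: sy.
Qed.

Lemma mean_on_between_supp A p q : measurable A -> G.-integrable A EFin ->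
  suppG G p -> suppG G q -> (p < q)%R -> `]p, q[ `<=` A ->
  exists u v, [/\ (A `&` suppG G) u, (A `&` suppG G) v & (u < mean_on A < v)%R].
Proof.
move=> mA intA sp sq pq pqA; set b := mean_on A.
have GA0 : 0 < G A.
  apply: lt_le_trans (measure_itv_supp_gt0 sp sq pq) _.
  by apply: le_measure; rewrite ?inE//; exact: measurable_itv.
have massA (i : interval R) : 0 < G (`]p, q[ `&` [set` i]) -> 0 < G (A `&` [set` i]).
  move=> /lt_le_trans; apply; apply: le_measure; rewrite ?inE; last exact: setSI.
  - exact: measurableI (measurable_itv _) (measurable_itv _).
  - exact: measurableI mA (measurable_itv _).
have sides := mean_on_null_above_below mA intA GA0.
have [below above] : 0 < G (A `&` `]-oo, b[) /\ 0 < G (A `&` `]b, +oo[).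
  rewrite !lt0e !measure_ge0 !andbT.
  have [/massA|/massA] := measure_itv_below_or_above_gt0 b sp sq pq; move=> /gt_eqF/negbT h.
  - by split=> //; apply: contra_neq h => /sides.
  - by split=> //; apply: contra_neq h => /sides.
have [u [Au ub] su] := supp_meets_measure_gt0 (measurableI _ _ mA (measurable_itv _)) below.
have [v [Av bv] sv] := supp_meets_measure_gt0 (measurableI _ _ mA (measurable_itv _)) above.
by exists u, v; split=> //; move: ub bv; rewrite /= !in_itv/= andbT => -> ->.
Qed.

End interval_support.
End support.

Section split_support.
Context (R : realType) (G : probability R R).
Hypothesis suppI : is_interval (suppG G).
Local Open Scope ereal_scope.

Lemma bG_nondeg a1 a2 : G.-integrable setT EFin ->
  nondeg_set (ocE a1 a2 `&` suppG G) ->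
  nondeg_set (ocE a1 (bG G a1 a2) `&` suppG G) /\
  nondeg_set (ocE (bG G a1 a2) a2 `&` suppG G).
Proof.
move=> intT [x [y [[[a1x xa2] sx] [[[a1y ya2] sy] xy]]]].
have mA := measurable_ocE a1 a2.
have sub : `]x, y[ `<=` ocE a1 a2.
  move=> z /=; rewrite in_itv/= => /andP[xz zy]; split.
  - by apply: lt_trans a1x _; rewrite lte_fin.
  - by apply: le_trans _ ya2; rewrite lee_fin ltW.
have intA : G.-integrable (ocE a1 a2) EFin by exact: integrableS intT.
have [u [v [[[a1u _] su] [[_ va2] sv] /andP[ub bv]]]] :=
  mean_on_between_supp suppI mA intA sx sy xy sub.
have GA0 : 0 < G (ocE a1 a2).
  apply: lt_le_trans (measure_itv_supp_gt0 suppI sx sy xy) _.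
  by apply: le_measure; rewrite ?inE//; exact: measurable_itv.
have -> : bG G a1 a2 = (mean_on G (ocE a1 a2))%:E by rewrite /bG GA0.
set b := mean_on G _ in ub bv *.
have sb : suppG G b by apply: (suppI su sv); rewrite !ltW.
split.
  exact: (nondeg_supp_ocE suppI (ltW a1u) ub (lexx b%:E) su sb).
exact: (nondeg_supp_ocE suppI (lexx b%:E) bv va2 sb sv).
Qed.

Lemma meanG_nondeg Theta : admissible_Theta Theta -> in_P1 Theta G ->
  nondeg_set (suppG G) ->
  nondeg_set (ocE (infT Theta) (meanG G) `&` suppG G) /\
  nondeg_set (ocE (meanG G) (supT Theta) `&` suppG G).
Proof.
move=> aT [GT intT] [p [q [sp [sq pq]]]].
have [u [v [[_ su] [_ sv] /andP[ub bv]]]] :=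
  mean_on_between_supp suppI measurableT intT sp sq pq (@subsetT _ _).
have -> : meanG G = (mean_on G setT)%:E.
  by rewrite /mean_on probability_setT /= divr1 fineK//; exact: integrable_fin_num.
set b := mean_on G _ in ub bv *.
have sb : suppG G b by apply: (suppI su sv); rewrite !ltW.
have suppT := suppG_sub_closed (admissible_Theta_closed aT) GT.
split.
  exact: (nondeg_supp_ocE suppI (infT_le (suppT u su)) ub (lexx b%:E) su sb).
exact: (nondeg_supp_ocE suppI (lexx b%:E) bv (le_supT (suppT v sv)) sb sv).
Qed.

End split_support.

Section sba_recursion.
Context (R : realType) (Theta : set R) (G : probability R R).

Lemma sba_aux0 k : sba_aux Theta G k 0 = infT Theta.
Proof. by case: k. Qed.

Lemma sba_aux_last k : sba_aux Theta G k (2 ^ k.+1) = supT Theta.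
Proof. by case: k => [//|k] /=; rewrite expn_eq0 eqxx. Qed.

Lemma sba_aux_double k m : (m <= 2 ^ k.+1)%N ->
  sba_aux Theta G k.+1 m.*2 = sba_aux Theta G k m.
Proof.
move=> le_m; rewrite [LHS]/=.
have [->|m0] := eqVneq m 0%N; first by rewrite sba_aux0.
rewrite double_eq0 (negbTE m0).
have [->|mN] := eqVneq m (2 ^ k.+1)%N.
  by rewrite -mul2n -expnS eqxx sba_aux_last.
have -> : (m.*2 == 2 ^ k.+2)%N = false by rewrite expnS -mul2n eqn_pmul2l // (negbTE mN).
by rewrite odd_double doubleK.
Qed.

Lemma sba_aux_doubleS k m :
  sba_aux Theta G k.+1 m.*2.+1 = bG G (sba_aux Theta G k m) (sba_aux Theta G k m.+1).
Proof.
rewrite [LHS]/=.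
have -> : (m.*2.+1 == 2 ^ k.+2)%N = false.
  by apply/negbTE/negP => /eqP /(congr1 odd); rewrite /= odd_double expnS oddM.
by rewrite odd_double uphalf_double.
Qed.

Definition nondeg_cell (f : nat -> \bar R) (l : nat) :=
  nondeg_set (ocE (f l) (f l.+1) `&` suppG G).

Hypothesis suppI : is_interval (suppG G).

Section cell_split.
Hypothesis intT : G.-integrable setT EFin.

Lemma nondeg_cell_double k m : (m < 2 ^ k.+1)%N ->
  nondeg_cell (sba_aux Theta G k) m -> nondeg_cell (sba_aux Theta G k.+1) m.*2.
Proof.
move=> lt_m /(bG_nondeg suppI intT)[nd_left _].
rewrite /nondeg_cell sba_aux_double ?sba_aux_doubleS; [exact: nd_left | exact: ltnW].
Qed.

Lemma nondeg_cell_doubleS k m : (m < 2 ^ k.+1)%N ->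
  nondeg_cell (sba_aux Theta G k) m -> nondeg_cell (sba_aux Theta G k.+1) m.*2.+1.
Proof.
move=> lt_m /(bG_nondeg suppI intT)[_ nd_right].
rewrite /nondeg_cell sba_aux_doubleS -doubleS sba_aux_double; [exact: nd_right | exact: lt_m].
Qed.

End cell_split.

Lemma sba_aux_nondeg_cell : admissible_Theta Theta -> in_P1 Theta G -> nondeg_set (suppG G) ->
  forall k l, (l < 2 ^ k.+1)%N -> nondeg_cell (sba_aux Theta G k) l.
Proof.
move=> aT P1 nS; have [nd_lo nd_hi] := meanG_nondeg suppI aT P1 nS.
elim=> [|k IH] l lt_l.
  by case: l lt_l => [|[|//]] _; [exact: nd_lo | exact: nd_hi].
rewrite -(odd_double_half l) expnS mul2n in lt_l *.
have lt_m : (l./2 < 2 ^ k.+1)%N.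
  by rewrite -ltn_double; apply: leq_ltn_trans lt_l; exact: leq_addl.
case: (odd l).
- exact: (nondeg_cell_doubleS P1.2 lt_m (IH _ lt_m)).
- exact: (nondeg_cell_double P1.2 lt_m (IH _ lt_m)).
Qed.

End sba_recursion.

Section level_intervals.
Context (R : realType) (Theta : set R) (G : probability R R).
Local Open Scope ereal_scope.

Lemma Theta_int1 n :
  Theta_int Theta G n 1 = [set x | mu Theta G n 0 <= x%:E /\ x%:E <= mu Theta G n 1].
Proof.
rewrite /Theta_int eqxx; case: ifP => [/eqP m0|//].
by apply/seteqP; split=> x [lo hi]; split=> //; rewrite m0 ?ltNyr ?leNye.
Qed.

Lemma Theta_int_ocE n l : (1 < l)%N ->
  Theta_int Theta G n l = ocE (mu Theta G n l.-1) (mu Theta G n l).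
Proof.
move=> l_gt1; rewrite /Theta_int gtn_eqF//; case: ifP => [/eqP lN|//].
rewrite -lN; case: ifP => // /negbT; rewrite ltey negbK => /eqP ->.
by apply/seteqP; split=> x /=; [split=> //; exact: leey|case].
Qed.

Lemma Theta_int_le n l : (0 < l)%N -> Theta_int Theta G n l `<=` [set x | x%:E <= mu Theta G n l].
Proof.
case: l => [//|[|l]] _; first by rewrite Theta_int1 => x [].
by rewrite Theta_int_ocE// => x [].
Qed.

Variable k : nat.
Local Notation f := (mu Theta G k.+1).
Local Notation N := (2 ^ k.+1)%N.
Hypothesis suppI : is_interval (suppG G).
Hypothesis cells : forall l, (l < N)%N -> nondeg_cell G f l.

Lemma mu_mono : {in [pred i | (i <= N)%N] &, {mono f : i j / (i <= j)%O}}.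
Proof.
apply: Order.NatMonotonyTheory.incn_inP => [i j _ + m|i _]; rewrite !inE.
- by move=> jN /andP[_ /ltnW mj]; exact: leq_trans mj jN.
- by move=> iN; exact: ocE_nondeg_lt (cells iN).
Qed.

Lemma mu_le i j : (i <= j <= N)%N -> f i <= f j.
Proof.
by move=> /andP[ij jN]; rewrite mu_mono ?inE ?leEnat// (leq_trans ij jN).
Qed.

Lemma ocE_sub_Theta_int l : (0 < l)%N -> ocE (f l.-1) (f l) `<=` Theta_int Theta G k.+1 l.
Proof.
case: l => [//|[|l]] _; last by rewrite Theta_int_ocE.
by rewrite Theta_int1 => x [/ltW lo hi].
Qed.

Lemma Theta_int_sub_supp l : (1 < l < N)%N -> Theta_int Theta G k.+1 l `<=` suppG G.
Proof.
move=> /andP[l_gt1 l_ltN] x; rewrite (Theta_int_ocE _ l_gt1) => -[lo hi].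
have N_gt0 : (0 < N)%N by rewrite expn_gt0.
have [p [_ [[[_ p_le] sp] _]]] := cells N_gt0.
have predN_lt : (N.-1 < N)%N by rewrite ltn_predL.
have [q [_ [[[q_gt _] sq] _]]] := cells predN_lt.
apply: (suppI sp sq); rewrite -!lee_fin; apply/andP; split.
- apply: le_trans p_le (le_trans _ (ltW lo)); apply: mu_le.
  by rewrite ltn_predRL l_gt1 (leq_trans (leq_pred l) (ltnW l_ltN)).
- apply: le_trans hi (le_trans _ (ltW q_gt)); apply: mu_le.
  by rewrite -ltnS (prednK N_gt0) l_ltN leq_pred.
Qed.

Lemma mu_inj : {in [pred i | (i <= N)%N] &, injective f}.
Proof. exact: inc_inj_in mu_mono. Qed.

Lemma Theta_bar_eq l : (0 < l <= N)%N ->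
  Theta_bar Theta G k.+1 l = Theta_int Theta G k.+1 l `&` suppG G.
Proof.
move=> /andP[l_gt0 l_leN]; rewrite /Theta_bar; case: ifP => [//|/norP[l_neq1 l_neqN]].
rewrite setIidl; first by [].
apply: Theta_int_sub_supp; apply/andP; split; rewrite ltn_neqAle.
- by rewrite eq_sym l_neq1 l_gt0.
- by rewrite l_neqN l_leN.
Qed.

Lemma Theta_bar_nondeg l : (0 < l <= N)%N -> nondeg_set (Theta_bar Theta G k.+1 l).
Proof.
move=> /[dup] /andP[l_gt0 l_leN] l_in; rewrite (Theta_bar_eq l_in).
have := cells (l := l.-1); rewrite /nondeg_cell (prednK l_gt0) => /(_ l_leN).
move=> cell; apply: (nondeg_setS _ cell); apply: setSI; exact: ocE_sub_Theta_int.
Qed.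

Lemma Theta_bar_disjoint i j : (0 < i <= N)%N -> (0 < j <= N)%N -> i <> j ->
  Theta_bar Theta G k.+1 i `&` Theta_bar Theta G k.+1 j = set0.
Proof.
wlog lt_ij : i j / (i < j)%N.
  move=> wlog i_in j_in ne_ij; case: (ltngtP i j) => [lt_ij|lt_ji|/ne_ij//].
  - exact: wlog.
  - by rewrite setIC; apply: (wlog j i lt_ji j_in i_in) => /esym.
move=> /[dup] i_in /andP[i_gt0 _] /[dup] j_in /andP[_ j_leN] _.
rewrite (Theta_bar_eq i_in) (Theta_bar_eq j_in); apply/seteqP; split=> [x|//].
have j_gt1 : (1 < j)%N := leq_ltn_trans i_gt0 lt_ij.
rewrite (Theta_int_ocE _ j_gt1) => -[[/(Theta_int_le i_gt0) x_le _] [[x_gt _] _]].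
have fij : f i <= f j.-1.
  by apply: mu_le; rewrite -ltnS (ltn_predK lt_ij) lt_ij (leq_trans (leq_pred j) j_leN).
by have := lt_le_trans x_gt (le_trans x_le fij); rewrite ltxx.
Qed.

Lemma bigcup_Theta_bar : suppG G `<=` Theta ->
  \bigcup_(l in [set l | (1 <= l <= N)%N]) Theta_bar Theta G k.+1 l = suppG G.
Proof.
move=> suppT; apply/seteqP; split=> [x [l /= l_in]|x sx].
  by rewrite (Theta_bar_eq l_in) => -[].
have f0_le : f 0 <= x%:E by rewrite /mu sba_aux0; exact: infT_le (suppT x sx).
have le_fN : x%:E <= f N by rewrite /mu sba_aux_last; exact: le_supT (suppT x sx).
have exN : exists l, (0 < l)%N && (x%:E <= f l) by exists N; rewrite expn_gt0 le_fN.
case: (ex_minnP exN) => l /andP[l_gt0 x_le] l_min.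
have l_leN : (l <= N)%N by apply: l_min; rewrite expn_gt0 le_fN.
have l_in : (0 < l <= N)%N by rewrite l_gt0 l_leN.
exists l => //; rewrite (Theta_bar_eq l_in); split=> //.
case: (ltngtP l 1) => [l_lt1|l_gt1|l1]; first by move: l_lt1; rewrite ltnNge l_gt0.
- apply: (ocE_sub_Theta_int l_gt0); split=> //.
  rewrite ltNge; apply/negP => x_le'.
  have : (l <= l.-1)%N by apply: l_min; rewrite ltn_predRL l_gt1 x_le'.
  by rewrite leqNgt ltn_predL l_gt0.
- by rewrite l1 Theta_int1; split; rewrite -?l1.
Qed.

End level_intervals.

Theorem lemma1 (R : realType) (Theta : set R) (G : probability R R) :
  admissible_Theta Theta ->
  in_P1 Theta G ->
  is_interval (suppG G) -> nondeg_set (suppG G) ->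
  regular_SBA Theta G /\
  (forall n : nat, (1 <= n)%N ->
     (forall l : nat, (1 <= l <= 2 ^ n)%N -> nondeg_set (Theta_bar Theta G n l)) /\
     (forall l1 l2 : nat, (1 <= l1 <= 2 ^ n)%N -> (1 <= l2 <= 2 ^ n)%N -> l1 <> l2 ->
        Theta_bar Theta G n l1 `&` Theta_bar Theta G n l2 = set0) /\
     \bigcup_(l in [set l : nat | (1 <= l <= 2 ^ n)%N]) Theta_bar Theta G n l = suppG G).
Proof.
move=> aT P1 suppI nS.
have cells k := @sba_aux_nondeg_cell R Theta G suppI aT P1 nS k.
have suppT := suppG_sub_closed (admissible_Theta_closed aT) P1.1.
split=> [[//|k] _ l1 l2 /andP[_ /ltnW l1_le] /andP[_ /ltnW l2_le]|[//|k] _].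
  exact: (mu_inj (cells k)).
split; first exact: (Theta_bar_nondeg suppI (cells k)).
split; first exact: (Theta_bar_disjoint suppI (cells k)).
exact: (bigcup_Theta_bar suppI (cells k) suppT).
Qed.
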